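(* Let $\mathcal{C}$ be a cyclic code of length $n$ over $\mathbb{F}_q$ with $\gcd(n,q)=1$, let $m$ be the multiplicative order of $q$ modulo $n$, and let $\alpha\in\mathbb{F}_{q^m}$ be a primitive $n$-th root of unity. Let $n_1$ be a positive divisor of $n$, put $\nu=n/n_1$ and $\beta=\alpha^{\nu}$. For $0\le i\le \nu-1$ let $\mathcal{I}_i=\{i,i+\nu,i+2\nu,\ldots,i+n-\nu\}$ and let $\mathcal{C}_{\mathcal{I}_i}=\{(c_i,c_{i+\nu},\ldots,c_{i+n-\nu}) : (c_0,\ldots,c_{n-1})\in\mathcal{C}\}$ be the code punctured to $\mathcal{I}_i$ (a cyclic code of length $n_1$). Then $$\mathcal{S}(\mathcal{C}_{\mathcal{I}_i})=\big\{\lambda \bmod n_1 : \{\lambda,\lambda+n_1,\ldots,\lambda+(\nu-1)n_1\}\subseteq \mathcal{S}(\mathcal{C})\big\},$$ i.e. for $\lambda\in\{0,\ldots,n_1-1\}$ we have $\lambda\in\mathcal{S}(\mathcal{C}_{\mathcal{I}_i})$ if and only if $\lambda+jn_1\in\mathcal{S}(\mathcal{C})$ for all $j=0,1,\ldots,\nu-1$.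
   Context: For a cyclic code $\mathcal{C}$ of length $n$ over $\mathbb{F}_q$ with $\gcd(n,q)=1$ and a primitive $n$-th root of unity $\alpha$, identify a codeword $\underline{c}=(c_0,\ldots,c_{n-1})$ with $c(x)=\sum_{i=0}^{n-1}c_ix^i$. The set of zeros of $\mathcal{C}$ is $\mathcal{S}(\mathcal{C})=\{j\in\{0,\ldots,n-1\} : c(\alpha^j)=0 \text{ for all } \underline{c}\in\mathcal{C}\}$. For the length-$n_1$ punctured code, zeros are computed with respect to $\beta=\alpha^{n/n_1}$: $\mathcal{S}(\mathcal{C}_{\mathcal{I}_i})=\{\lambda\in\{0,\ldots,n_1-1\}: \sum_{t=0}^{n_1-1}a_t\beta^{\lambda t}=0 \text{ for all } (a_0,\ldots,a_{n_1-1})\in \mathcal{C}_{\mathcal{I}_i}\}$. *)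

From HB Require Import structures.
From mathcomp Require Import all_boot all_order all_algebra all_field.
Set Implicit Arguments. Unset Strict Implicit. Unset Printing Implicit Defensive.
Import GRing.Theory.
Local Open Scope ring_scope.

Definition rowcoef (F : Type) (n : nat) (c : 'rV[F]_n) (k : nat) (d : F) : F :=
  if insub k is Some j then c 0 j else d.

Definition coef_at (F : nmodType) (n : nat) (c : 'rV[F]_n) (k : nat) : F :=
  rowcoef c k 0.

Definition cshift (F : nmodType) (n : nat) (c : 'rV[F]_n) : 'rV[F]_n :=
  \row_(i < n) coef_at c ((i + n - 1) %% n).

Definition is_cyclic_code (F : fieldType) (n : nat) (C : {vspace 'rV[F]_n}) : Prop :=
  forall c, c \in C -> cshift c \in C.

Definition word_eval (F : fieldType) (L : fieldExtType F) (k : nat)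
  (c : 'rV[F]_k) (w : L) : L :=
  \sum_(t < k) (c 0 t)%:A * w ^+ t.

Definition is_zero_of (F : fieldType) (L : fieldExtType F) (k : nat)
  (P : 'rV[F]_k -> Prop) (w : L) (j : nat) : Prop :=
  forall c, P c -> word_eval c (w ^+ j) = 0.

Definition puncture (F : nmodType) (n n1 nu i : nat) (c : 'rV[F]_n) : 'rV[F]_n1 :=
  \row_(t < n1) coef_at c (i + t * nu).

Definition punctured_code (F : fieldType) (n n1 nu i : nat)
  (C : {vspace 'rV[F]_n}) : 'rV[F]_n1 -> Prop :=
  fun a => exists2 c, c \in C & a = puncture n1 nu i c.

From HB Require Import structures.
From mathcomp Require Import all_boot all_order all_algebra all_field.
From mathcomp Require Import zify.
Set Implicit Arguments. Unset Strict Implicit. Unset Printing Implicit Defensive.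
Import GRing.Theory.
Local Open Scope ring_scope.

(* Grouping exponents by their residue mod nu gives c(w) = sum_(i < nu) w^i a_i(w^nu),
   where a_i is the puncture of c to I_i.  For w = alpha^(lambda + j n1) one has
   w^nu = beta^lambda independently of j, so the values c(alpha^(lambda + j n1)), j < nu,
   form the discrete Fourier transform, for the primitive nu-th root alpha^n1, of the
   vector (alpha^(lambda i) a_i(beta^lambda))_i.  Cyclic shifts move every I_i' onto
   I_i, which gives one inclusion; the other is Fourier inversion, possible because
   nu divides n and hence is invertible in L. *)

Lemma big_ord_mul_residues (R : Type) (idx : R) (op : Monoid.com_law idx)
    (n n1 nu : nat) (f : nat -> R) :
  n = (nu * n1)%N ->
  \big[op/idx]_(s < n) f s =
  \big[op/idx]_(i < nu) \big[op/idx]_(t < n1) f (i + t * nu)%N.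
Proof.
move=> ->; rewrite -(big_mkord xpredT f) mulnC big_nat_mul big_mkord exchange_big /=.
apply: eq_bigr => t _.
by rewrite mulSn addnC -{1}(add0n (t * nu)%N) big_addn addKn big_mkord.
Qed.

Lemma sum_unity_root_expr (R : idomainType) (nu : nat) (w : R) :
  w ^+ nu = 1 -> \sum_(j < nu) w ^+ j = if w == 1 then nu%:R else 0.
Proof.
move=> w_nu; case: eqP => [-> | w_neq1].
  by under eq_bigr do rewrite expr1n; rewrite sumr_const card_ord.
have /eqP := subrX1 w nu; rewrite w_nu subrr eq_sym mulf_eq0 subr_eq0.
by move/eqP: w_neq1 => /negbTE ->; move/eqP.
Qed.

Lemma prim_root_dft_eq0 (R : fieldType) (nu : nat) (g : R) (x : nat -> R) :
  nu.-primitive_root g ->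
  (forall j, (j < nu)%N -> \sum_(k < nu) g ^+ (j * k) * x k = 0) ->
  forall i, (i < nu)%N -> x i = 0.
Proof.
move=> prim_g dft_x0 i lt_i_nu.
have gi_neq0 : g ^+ i != 0.
  by rewrite expf_neq0 // (prim_root_eq0 prim_g) -lt0n (prim_order_gt0 prim_g).
have inner_sum (k : 'I_nu) : \sum_(j < nu) (g ^+ i)^-1 ^+ j * (g ^+ (j * k) * x k)
    = if k == i :> nat then x i * nu%:R else 0.
  have termE j : (g ^+ i)^-1 ^+ j * (g ^+ (j * k) * x k) = x k * (g ^+ k / g ^+ i) ^+ j.
    by rewrite exprMn exprVn -!exprM !(mulnC j) mulrA mulrC [_^-1 * _]mulrC.
  under eq_bigr do rewrite termE.
  rewrite -mulr_sumr sum_unity_root_expr; last first.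
    rewrite exprMn exprVn -!exprM !(mulnC _ nu) !exprM (prim_expr_order prim_g).
    by rewrite !expr1n invr1 mulr1.
  rewrite -(inj_eq (mulIf gi_neq0)) divfK // mul1r (eq_prim_root_expr prim_g) !modn_small //.
  by case: eqP => [-> | _]; rewrite ?mulr0.
have : \sum_(j < nu) (g ^+ i)^-1 ^+ j * \sum_(k < nu) g ^+ (j * k) * x k = 0.
  by rewrite big1 // => j lt_j; rewrite dft_x0 ?mulr0.
under eq_bigr do rewrite big_distrr.
rewrite exchange_big /= (eq_bigr _ (fun k _ => inner_sum k)) -big_mkcond
  (big_ord1_eq _ (fun=> x i * nu%:R)) lt_i_nu.
by move/eqP; rewrite mulf_eq0 (negbTE (prim_root_natf_neq0 prim_g)) orbF => /eqP.
Qed.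

Lemma coef_at_cshift (F : nmodType) (n : nat) (c : 'rV[F]_n) (s : nat) :
  (s < n)%N -> coef_at (cshift c) s = coef_at c ((s + n - 1) %% n).
Proof. by move=> lt_s_n; rewrite /coef_at /rowcoef insubT /= mxE. Qed.

Lemma coef_at_iter_cshift (F : nmodType) (n : nat) (c : 'rV[F]_n) (r s : nat) :
  (s < n)%N -> coef_at (iter r (@cshift F n) c) ((s + r) %% n) = coef_at c s.
Proof.
move=> lt_s_n; have n_gt0 : (0 < n)%N by case: n c lt_s_n.
elim: r => [|r IHr]; first by rewrite addn0 modn_small.
rewrite iterS coef_at_cshift ?ltn_pmod // -IHr; congr (coef_at _ _).
by rewrite -addnBA // modnDml addnS addSnnS subn1 prednK // modnDr.
Qed.

Lemma puncture_iter_cshift (F : nmodType) (n n1 nu i i' : nat) (c : 'rV[F]_n) :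
  n = (nu * n1)%N -> (i < nu)%N -> (i' < nu)%N ->
  puncture n1 nu i (iter (i + n - i') (@cshift F n) c) = puncture n1 nu i' c.
Proof.
move=> nE lt_i_nu lt_i'_nu; apply/rowP => t; rewrite !mxE.
have lt_t_n1 := ltn_ord t.
have lt_i't_n : (i' + t * nu < n)%N by rewrite nE; nia.
have -> : (i + t * nu = (i' + t * nu + (i + n - i')) %% n)%N.
  have -> : (i' + t * nu + (i + n - i') = i + t * nu + n)%N by lia.
  by rewrite modnDr modn_small // nE; nia.
exact: coef_at_iter_cshift.
Qed.

Lemma cyclic_code_iter_cshift (F : fieldType) (n r : nat) (C : {vspace 'rV[F]_n}) c :
  is_cyclic_code C -> c \in C -> iter r (@cshift F n) c \in C.
Proof. by move=> cyclicC cC; elim: r => [|r IHr] //=; apply: cyclicC. Qed.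

Lemma punctured_code_puncture (F : fieldType) (n n1 nu i i' : nat)
    (C : {vspace 'rV[F]_n}) (c : 'rV[F]_n) :
  is_cyclic_code C -> n = (nu * n1)%N -> (i < nu)%N -> (i' < nu)%N -> c \in C ->
  punctured_code nu i C (puncture n1 nu i' c).
Proof.
move=> cyclicC nE lt_i_nu lt_i'_nu cC.
exists (iter (i + n - i') (@cshift F n) c); first exact: cyclic_code_iter_cshift.
by rewrite puncture_iter_cshift.
Qed.

Lemma word_eval_puncture (F : fieldType) (L : fieldExtType F) (n n1 nu : nat)
    (c : 'rV[F]_n) (w : L) :
  n = (nu * n1)%N ->
  word_eval c w = \sum_(i < nu) w ^+ i * word_eval (puncture n1 nu i c) (w ^+ nu).
Proof.
move=> nE; have -> : word_eval c w = \sum_(s < n) (coef_at c s)%:A * w ^+ s.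
  by apply: eq_bigr => s _; rewrite /coef_at /rowcoef valK.
rewrite (big_ord_mul_residues _ (fun s => (coef_at c s)%:A * w ^+ s) nE) /=.
apply: eq_bigr => i _; rewrite big_distrr.
by apply: eq_bigr => t _; rewrite mxE /= mulrCA -exprM (mulnC nu) -exprD.
Qed.

Lemma expr_unity_root_shift (R : pzRingType) (z : R) (nu n1 l j : nat) :
  z ^+ (nu * n1) = 1 -> (z ^+ (l + j * n1)) ^+ nu = (z ^+ nu) ^+ l.
Proof.
move=> z_n; rewrite -!exprM mulnDl exprD.
have -> : z ^+ (j * n1 * nu) = 1 by rewrite -mulnA (mulnC n1) mulnC exprM z_n expr1n.
by rewrite mulr1 mulnC.
Qed.

Theorem lemma2 (F : finFieldType) (L : fieldExtType F) (n : nat)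
  (C : {vspace 'rV[F]_n}) (m : nat) (alpha : L) (n1 : nat) (i : nat) :
  (0 < n)%N ->
  coprime n #|F| ->
  is_cyclic_code C ->
  (* m is the multiplicative order of q = #|F| modulo n *)
  (0 < m)%N -> (#|F| ^ m = 1 %[mod n])%N ->
  (forall k, (0 < k)%N -> (#|F| ^ k = 1 %[mod n])%N -> (m <= k)%N) ->
  (* L is F_{q^m} *)
  \dim {:L} = m ->
  n.-primitive_root alpha ->
  (0 < n1)%N -> (n1 %| n)%N ->
  let nu := (n %/ n1)%N in
  let beta := alpha ^+ nu in
  (i < nu)%N ->
  forall lambda : nat, (lambda < n1)%N ->
    (is_zero_of (@punctured_code F n n1 nu i C) beta lambda <->
     forall j : nat, (j < nu)%N ->
       is_zero_of (fun c => c \in C) alpha (lambda + j * n1)%N).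
Proof.
move=> n_gt0 _ cyclicC _ _ _ _ prim_alpha _ n1_dvd_n nu beta lt_i_nu lam _.
have nE : n = (nu * n1)%N by rewrite divnK.
have rootE j : (alpha ^+ (lam + j * n1)) ^+ nu = beta ^+ lam.
  by apply: expr_unity_root_shift; rewrite -nE prim_expr_order.
split=> [zero_punct j _ c cC | zero_C _ [c cC ->]].
  rewrite (word_eval_puncture _ _ nE) big1 // => i' _.
  by rewrite rootE zero_punct ?mulr0 //; apply: punctured_code_puncture.
have prim_gamma : nu.-primitive_root (alpha ^+ n1).
  by have := dvdn_prim_root prim_alpha (dvdn_div n1_dvd_n); rewrite divnA // mulKn.
pose x k := alpha ^+ (lam * k) * word_eval (puncture n1 nu k c) (beta ^+ lam).
have dft_x0 j : (j < nu)%N -> \sum_(k < nu) (alpha ^+ n1) ^+ (j * k) * x k = 0.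
  move=> lt_j_nu; rewrite -[RHS](zero_C j lt_j_nu c cC) (word_eval_puncture _ _ nE).
  apply: eq_bigr => k _; rewrite rootE /x mulrA -!exprM -exprD.
  by congr (alpha ^+ _ * _); nia.
have /eqP := prim_root_dft_eq0 prim_gamma dft_x0 lt_i_nu.
by rewrite mulf_eq0 expf_eq0 (prim_root_eq0 prim_alpha) gtn_eqF // andbF => /eqP.
Qed.
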